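(* Let $\mathbf C$ be an $r$-regular category, $f:Y\to X$ an arrow and $Z$ an object, and consider the pullback square formed by $f\times 1_Z:Y\times Z\to X\times Z$, $\pi_Y:Y\times Z\to Y$, $\pi_X:X\times Z\to X$ and $f$. Let $S\in\mathsf{Sub}_r(X\times Z)$ and let $B_1,\dots,B_n\in\mathsf{Sub}_r(X)$ satisfy: (a) $\pi_X^{-1}(B_i)\le S$ for all $i$, and (b) for every $D\in\mathsf{Sub}_r(X)$ with $\pi_X^{-1}(D)\le S$ there is $i$ with $D\le B_i$. Then $f^{-1}(B_1),\dots,f^{-1}(B_n)\in\mathsf{Sub}_r(Y)$ satisfy the same properties with respect to $(f\times 1)^{-1}(S)$: (a') $\pi_Y^{-1}(f^{-1}(B_i))\le(f\times 1)^{-1}(S)$ for all $i$, and (b') for every $D\in\mathsf{Sub}_r(Y)$ with $\pi_Y^{-1}(D)\le(f\times1)^{-1}(S)$ there is $i$ with $D\le f^{-1}(B_i)$.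
   Context: A category is $r$-regular if it has all finite limits, epimorphisms are stable under pullback, and every arrow factors as an epimorphism followed by a regular monomorphism. $\mathsf{Sub}_r(X)$ is the poset of regular subobjects of $X$ and, for an arrow $g:Y\to X$, $g^{-1}:\mathsf{Sub}_r(X)\to\mathsf{Sub}_r(Y)$ is pullback along $g$; $\pi_X$, $\pi_Y$ are product projections. *)

From Stdlib Require Import ClassicalEpsilon.

Set Implicit Arguments.

Record cat := Cat {
  ob :> Type;
  hom : ob -> ob -> Type;
  idc : forall A, hom A A;
  comp : forall A B C, hom B C -> hom A B -> hom A C;
  comp_id_l : forall A B (f : hom A B), comp (idc B) f = f;
  comp_id_r : forall A B (f : hom A B), comp f (idc A) = f;
  comp_assoc : forall A B C D (h : hom C D) (g : hom B C) (f : hom A B),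
      comp h (comp g f) = comp (comp h g) f
}.

Arguments hom {c} _ _.
Arguments idc {c} _.
Arguments comp {c A B C} _ _.
Notation "g \o f" := (comp g f) (at level 40, left associativity).

Section Notions.
Variable C : cat.

Definition is_terminal (T : C) : Prop :=
  forall A : C, exists! t : hom A T, True.

Definition is_pullback {A B D : C} (f : hom A D) (g : hom B D)
  (P : C) (p1 : hom P A) (p2 : hom P B) : Prop :=
  f \o p1 = g \o p2 /\
  forall (W : C) (h1 : hom W A) (h2 : hom W B), f \o h1 = g \o h2 ->
    exists! k : hom W P, p1 \o k = h1 /\ p2 \o k = h2.

Definition is_product (X Z P : C) (p1 : hom P X) (p2 : hom P Z) : Prop :=
  forall (W : C) (h1 : hom W X) (h2 : hom W Z),
    exists! k : hom W P, p1 \o k = h1 /\ p2 \o k = h2.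

Definition has_pullbacks : Prop :=
  forall (A B D : C) (f : hom A D) (g : hom B D),
    exists (P : C) (p1 : hom P A) (p2 : hom P B), is_pullback f g P p1 p2.

Definition has_finite_limits : Prop :=
  (exists T : C, is_terminal T) /\ has_pullbacks.

Definition epi {A B : C} (e : hom A B) : Prop :=
  forall (D : C) (u v : hom B D), u \o e = v \o e -> u = v.

Definition mono {A B : C} (m : hom A B) : Prop :=
  forall (W : C) (u v : hom W A), m \o u = m \o v -> u = v.

Definition regular_mono {A X : C} (m : hom A X) : Prop :=
  exists (Q : C) (u v : hom X Q),
    u \o m = v \o m /\
    forall (W : C) (h : hom W X), u \o h = v \o h ->
      exists! k : hom W A, m \o k = h.

Definition epi_pullback_stable : Prop :=
  forall (A B D : C) (f : hom A D) (g : hom B D) (P : C)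
    (p1 : hom P A) (p2 : hom P B),
    is_pullback f g P p1 p2 -> epi f -> epi p2.

Definition epi_regmono_factorization : Prop :=
  forall (A B : C) (f : hom A B), exists (M : C) (e : hom A M) (m : hom M B),
    epi e /\ regular_mono m /\ f = m \o e.

Record r_regular : Prop := {
  rr_limits : has_finite_limits;
  rr_epi_stable : epi_pullback_stable;
  rr_factor : epi_regmono_factorization
}.

(** (Representatives of) subobjects: an object with an arrow into X.
    Membership in Sub_r(X) is expressed by [regular_mono (arr m)]. *)
Record sub (X : C) := Sub { sdom : C; arr : hom sdom X }.

Definition sub_le {X : C} (m n : sub X) : Prop :=
  exists h : hom (sdom m) (sdom n), arr n \o h = arr m.

Lemma pullback_sig (hp : has_pullbacks) {A B D : C} (f : hom A D) (g : hom B D) :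
  exists t : {P : C & (hom P A * hom P B)%type},
    is_pullback f g (projT1 t) (fst (projT2 t)) (snd (projT2 t)).
Proof.
  destruct (hp A B D f g) as (P & p1 & p2 & H).
  exists (existT _ P (p1, p2)); exact H.
Qed.

Definition preim (hp : has_pullbacks) {X Y : C} (g : hom Y X) (m : sub X) : sub Y :=
  let t := proj1_sig (constructive_indefinite_description _
             (pullback_sig hp (arr m) g)) in
  @Sub Y (projT1 t) (snd (projT2 t)).

Lemma preim_pullback (hp : has_pullbacks) {X Y : C} (g : hom Y X) (m : sub X) :
  exists p1 : hom (sdom (preim hp g m)) (sdom m),
    is_pullback (arr m) g (sdom (preim hp g m)) p1 (arr (preim hp g m)).
Proof.
  unfold preim.
  destruct (constructive_indefinite_description _ (pullback_sig hp (arr m) g))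
    as [t Ht]; simpl.
  exists (fst (projT2 t)); exact Ht.
Qed.

End Notions.

Arguments sub {C} X.
Arguments Sub {C X} sdom arr.
Arguments sdom {C X} _.
Arguments arr {C X} _.
Arguments is_product {C X Z P} _ _.
Arguments is_pullback {C A B D} _ _ _ _ _.
Arguments regular_mono {C A X} _.
Arguments epi {C A B} _.
Arguments sub_le {C X} _ _.
Arguments preim {C} _ {X Y} _ _.

Definition rr_pullbacks {C : cat} (hC : r_regular C) : has_pullbacks C :=
  proj2 (rr_limits hC).

(** Pulling back along [f] is monotone and commutes with composition, which
    gives (a'). For (b'), factor [f \o D] as an epi [e] followed by a regular
    mono [M]. Pulling [e] back to [pi_X^{-1}(M)] gives an epi onto
    [pi_X^{-1}(M)] whose composite into [X * Z] factors through
    [(f * 1)^{-1}(S)], hence through [S]; since epis lift against regular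
    monos, [pi_X^{-1}(M) <= S]. So [M <= B_i] for some [i], and then
    [D <= f^{-1}(B_i)]. *)

Section Subobjects.
Variable C : cat.

Lemma sub_le_trans {X : C} (m n p : sub X) :
  sub_le m n -> sub_le n p -> sub_le m p.
Proof.
  intros [h Hh] [k Hk]. exists (k \o h).
  rewrite comp_assoc, Hk. exact Hh.
Qed.

Lemma pullback_regular_mono {A B D : C} {m : hom A D} {g : hom B D} {P : C}
  {p1 : hom P A} {p2 : hom P B} :
  is_pullback m g P p1 p2 -> regular_mono m -> regular_mono p2.
Proof.
  intros [Hpe Hpu] (Q & u & v & Huv & Heq).
  exists Q, (u \o g), (v \o g). split.
  - rewrite <- !comp_assoc, <- Hpe, !comp_assoc, Huv. reflexivity.
  - intros W h Hh. rewrite <- !comp_assoc in Hh.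
    destruct (Heq W (g \o h) Hh) as [k [Hk Hku]].
    destruct (Hpu W k h Hk) as [k' [[_ H2] Hu']].
    exists k'. split; [exact H2|]. intros k'' Hk''. apply Hu'. split; auto.
    symmetry; apply Hku. rewrite comp_assoc, Hpe, <- comp_assoc, Hk''.
    reflexivity.
Qed.

Lemma epi_regular_mono_lift {A E X M : C} (e : hom A E) (m : hom M X)
  (a : hom E X) (t : hom A M) :
  epi e -> regular_mono m -> a \o e = m \o t ->
  exists w : hom E M, m \o w = a.
Proof.
  intros He (Q & u & v & Huv & Heq) Hat.
  assert (Hua : u \o a = v \o a).
  { apply He. rewrite <- !comp_assoc, Hat, !comp_assoc, Huv. reflexivity. }
  destruct (Heq E a Hua) as [w [Hw _]]. exists w. exact Hw.
Qed.

Lemma is_product_ext {X Z P : C} {pX : hom P X} {pZ : hom P Z} :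
  is_product pX pZ ->
  forall (W : C) (a b : hom W P), pX \o a = pX \o b -> pZ \o a = pZ \o b ->
  a = b.
Proof.
  intros hP W a b HX HZ.
  destruct (hP W (pX \o b) (pZ \o b)) as [k [_ Hk]].
  transitivity k; [symmetry|]; apply Hk; split; auto.
Qed.

Variable hp : has_pullbacks C.

Lemma sub_le_preim {X Y : C} (g : hom Y X) (m : sub X) (n : sub Y) :
  sub_le n (preim hp g m) <->
  exists t : hom (sdom n) (sdom m), arr m \o t = g \o arr n.
Proof.
  destruct (preim_pullback hp g m) as [p1 [Hpe Hpu]]. split.
  - intros [h Hh]. exists (p1 \o h).
    rewrite comp_assoc, Hpe, <- comp_assoc, Hh. reflexivity.
  - intros [t Ht]. destruct (Hpu _ t (arr n) Ht) as [k [[_ Hk] _]].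
    exists k. exact Hk.
Qed.

Lemma preim_regular_mono {X Y : C} (g : hom Y X) (m : sub X) :
  regular_mono (arr m) -> regular_mono (arr (preim hp g m)).
Proof.
  destruct (preim_pullback hp g m) as [p1 Hp].
  exact (pullback_regular_mono Hp).
Qed.

Lemma preim_mono {X Y : C} (g : hom Y X) (m m' : sub X) :
  sub_le m m' -> sub_le (preim hp g m) (preim hp g m').
Proof.
  intros [h Hh]. apply sub_le_preim.
  destruct (preim_pullback hp g m) as [p1 [Hpe _]].
  exists (h \o p1). rewrite comp_assoc, Hh. exact Hpe.
Qed.

Lemma preim_preim_le_preim_comp {X Y W : C} (g : hom Y X) (h : hom W Y)
  (m : sub X) :
  sub_le (preim hp h (preim hp g m)) (preim hp (g \o h) m).
Proof.
  apply sub_le_preim.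
  destruct (preim_pullback hp g m) as [p1 [Hpe _]].
  destruct (preim_pullback hp h (preim hp g m)) as [q1 [Hqe _]].
  exists (p1 \o q1).
  rewrite comp_assoc, Hpe, <- comp_assoc, Hqe, comp_assoc. reflexivity.
Qed.

Lemma preim_comp_le_preim_preim {X Y W : C} (g : hom Y X) (h : hom W Y)
  (m : sub X) :
  sub_le (preim hp (g \o h) m) (preim hp h (preim hp g m)).
Proof.
  set (q := arr (preim hp (g \o h) m)).
  destruct (preim_pullback hp (g \o h) m) as [p1 [Hpe _]].
  assert (Hq : sub_le (Sub _ (h \o q)) (preim hp g m)).
  { apply sub_le_preim. exists p1. rewrite <- comp_assoc in Hpe. exact Hpe. }
  apply sub_le_preim. exact Hq.
Qed.

End Subobjects.

Arguments sub_le_trans {C X m n p}.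
Arguments epi_regular_mono_lift {C A E X M e m a t}.
Arguments is_product_ext {C X Z P pX pZ}.
Arguments sub_le_preim {C} hp {X Y} g m n.
Arguments preim_regular_mono {C} hp {X Y} g m.
Arguments preim_mono {C} hp {X Y} g {m m'}.

Section ProductSquare.
Variables (C : cat) (hC : r_regular C) (X Y Z : C) (f : hom Y X).
Variables (XZ : C) (pX : hom XZ X) (pZ : hom XZ Z) (hXZ : is_product pX pZ).
Variables (YZ : C) (pY : hom YZ Y) (pZ' : hom YZ Z) (hYZ : is_product pY pZ').
Variables (f1 : hom YZ XZ) (hf1X : pX \o f1 = f \o pY) (hf1Z : pZ \o f1 = pZ').

Local Notation hp := (rr_pullbacks hC).

Lemma preim_proj_preim_le (B : sub X) :
  sub_le (preim hp pY (preim hp f B)) (preim hp f1 (preim hp pX B)).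
Proof.
  eapply sub_le_trans; [apply preim_preim_le_preim_comp|].
  rewrite <- hf1X. apply preim_comp_le_preim_preim.
Qed.

Lemma preim_proj_image_le (S : sub XZ) (hS : regular_mono (arr S))
  (D : sub Y) (M : C) (e : hom (sdom D) M) (m : hom M X) :
  epi e -> f \o arr D = m \o e ->
  sub_le (preim hp pY D) (preim hp f1 S) -> sub_le (preim hp pX (Sub M m)) S.
Proof.
  intros He Hfd HDS.
  set (P := preim hp pX (Sub M m)).
  destruct (preim_pullback hp pX (Sub M m)) as [p1 [Hpe _]].
  change (m \o p1 = pX \o arr P) in Hpe.
  destruct (hp _ _ _ e p1) as (Q & q1 & q2 & Hq).
  pose proof (rr_epi_stable hC Hq He) as Hq2.
  destruct Hq as [Hqe _].
  destruct (hYZ Q (arr D \o q1) (pZ \o (arr P \o q2))) as [g [[Hg1 Hg2] _]].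
  assert (Hf1g : f1 \o g = arr P \o q2).
  { apply (is_product_ext hXZ).
    - rewrite comp_assoc, hf1X, <- comp_assoc, Hg1, comp_assoc, Hfd,
        <- comp_assoc, Hqe, comp_assoc, Hpe, comp_assoc. reflexivity.
    - rewrite comp_assoc, hf1Z. exact Hg2. }
  assert (HgS : sub_le (Sub Q g) (preim hp f1 S)).
  { eapply sub_le_trans; [|exact HDS]. apply sub_le_preim.
    exists q1. symmetry. exact Hg1. }
  destruct (proj1 (sub_le_preim _ _ _ _) HgS) as [t Ht]; simpl in Ht.
  rewrite Hf1g in Ht.
  destruct (epi_regular_mono_lift Hq2 hS (eq_sym Ht)) as [w Hw].
  exists w. exact Hw.
Qed.

End ProductSquare.

Arguments preim_proj_preim_le {C} hC {X Y f XZ pX YZ pY f1}.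
Arguments preim_proj_image_le {C} hC {X Y Z f XZ pX pZ} hXZ {YZ pY pZ'} hYZ
  {f1} hf1X hf1Z {S} hS {D M e m}.

Theorem mainTheorem7 (C : cat) (hC : r_regular C)
  (X Y Z : C) (f : hom Y X)
  (XZ : C) (pX : hom XZ X) (pZ : hom XZ Z) (hXZ : is_product pX pZ)
  (YZ : C) (pY : hom YZ Y) (pZ' : hom YZ Z) (hYZ : is_product pY pZ')
  (f1 : hom YZ XZ) (hf1X : pX \o f1 = f \o pY) (hf1Z : pZ \o f1 = pZ')
  (S : sub XZ) (hS : regular_mono (arr S))
  (n : nat) (B : nat -> sub X)
  (hB : forall i, i < n -> regular_mono (arr (B i)))
  (ha : forall i, i < n -> sub_le (preim (rr_pullbacks hC) pX (B i)) S)
  (hb : forall D : sub X, regular_mono (arr D) ->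
        sub_le (preim (rr_pullbacks hC) pX D) S ->
        exists i, i < n /\ sub_le D (B i)) :
  (forall i, i < n -> regular_mono (arr (preim (rr_pullbacks hC) f (B i)))) /\
  (forall i, i < n ->
     sub_le (preim (rr_pullbacks hC) pY (preim (rr_pullbacks hC) f (B i)))
            (preim (rr_pullbacks hC) f1 S)) /\
  (forall D : sub Y, regular_mono (arr D) ->
     sub_le (preim (rr_pullbacks hC) pY D) (preim (rr_pullbacks hC) f1 S) ->
     exists i, i < n /\ sub_le D (preim (rr_pullbacks hC) f (B i))).
Proof.
  split; [|split].
  - intros i Hi. exact (preim_regular_mono _ f (B i) (hB i Hi)).
  - intros i Hi. eapply sub_le_trans.
    + exact (preim_proj_preim_le hC hf1X (B i)).
    + exact (preim_mono _ f1 (ha i Hi)).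
  - intros D _ HDS.
    destruct (rr_factor hC _ _ (f \o arr D)) as (M & e & m & He & Hm & Hfd).
    pose proof (preim_proj_image_le hC hXZ hYZ hf1X hf1Z hS He Hfd HDS) as HMS.
    destruct (hb (Sub M m) Hm HMS) as (i & Hi & t & Ht).
    exists i. split; [exact Hi|].
    apply sub_le_preim. exists (t \o e).
    rewrite comp_assoc, Ht. symmetry. exact Hfd.
Qed.
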